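(* Let $G$ be a group with finite generating set $S$, and let $F\subset G$ be a finite nonempty set which is optimal for the outer boundary. Then there is a set $F^*$ with $|F^*|=|F|$ which is optimal for the outer boundary and such that $F^*\cup\partial_{out}F^*$ is optimal for the inner boundary. Furthermore, every set of cardinality $|F^*\cup\partial_{out}F^*|$ which is optimal for the inner boundary is of the form $F''\cup\partial_{out}F''$ for some set $F''$ with $|F''|=|F|$ which is optimal for the outer boundary.
   Context: For finite $F\subset G$: $\partial_{in}F=\{g\in F:\exists s\in S\cup S^{-1}, gs\notin F\}$ and $\partial_{out}F=\{gs:g\in F,s\in S\cup S^{-1}\}\setminus F$. A finite nonempty set $F$ is optimal for the inner (resp. outer) boundary if for every finite nonempty $F'$ with $|F'|\leq|F|$ one has $\frac{|\partial F'|}{|F'|}\geq\frac{|\partial F|}{|F|}$, with strict inequality whenever $|F'|<|F|$, where $\partial=\partial_{in}$ (resp. $\partial_{out}$). *)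

From HB Require Import structures.
From mathcomp Require Import all_boot all_order all_algebra.
From mathcomp Require Import finmap.

Set Implicit Arguments.
Unset Strict Implicit.
Unset Printing Implicit Defensive.

Local Open Scope fset_scope.

Section Boundaries.
Variable G : groupType.

Definition symgens (S : {fset G}) : {fset G} :=
  S `|` [fset (s^-1)%g | s in S].

Definition generates (S : {fset G}) : Prop :=
  forall g : G, exists w : seq G,
    all (fun s => s \in symgens S) w /\ g = foldr (fun a b => (a * b)%g) 1%g w.

Definition inner_bd (S F : {fset G}) : {fset G} :=
  [fset g in F | has (fun s => (g * s)%g \notin F) (enum_fset (symgens S))].

Definition outer_bd (S F : {fset G}) : {fset G} :=
  [fset (g * s)%g | g in F, s in symgens S] `\` F.

Definition bd_ratio (bd : {fset G} -> {fset G}) (F : {fset G}) : rat :=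
  ((#|` bd F|)%:R / (#|` F|)%:R)%R.

Definition optimal (bd : {fset G} -> {fset G}) (F : {fset G}) : Prop :=
  F != fset0 /\
  forall F' : {fset G}, F' != fset0 -> (#|` F'| <= #|` F|)%N ->
    (bd_ratio bd F <= bd_ratio bd F')%R /\
    ((#|` F'| < #|` F|)%N -> (bd_ratio bd F < bd_ratio bd F')%R).

Definition optimal_in (S F : {fset G}) : Prop := optimal (inner_bd S) F.
Definition optimal_out (S F : {fset G}) : Prop := optimal (outer_bd S) F.

End Boundaries.

(* Let n = |F| and b = |∂out F|.  The interior I = E \ ∂in E of any set E has
   its outer boundary inside ∂in E, so E contains I ∪ ∂out I.  If |E| <= n + b
   and |I| >= n, pick A ⊆ I with |A| = n: optimality of F gives |∂out A| >= b,
   while A ∪ ∂out A ⊆ E has at most n + b points, so E = A ∪ ∂out A with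
   |∂out A| = b, and such an A is again optimal for the outer boundary.  If
   |I| < n, optimality of F applied to I gives |∂in E| / |E| > b / (n + b).
   Conversely ∂in (A ∪ ∂out A) ⊆ ∂out A, so each such closure has inner ratio
   at most b / (n + b); choosing F* among these A so that its closure has the
   fewest inner boundary points gives both claims. *)
From HB Require Import structures.
From mathcomp Require Import all_boot all_order all_algebra.
From mathcomp Require Import finmap zify.
From Stdlib Require Wf_nat Classical_Prop.
Import GRing.Theory Num.Theory.

Set Implicit Arguments.
Unset Strict Implicit.
Unset Printing Implicit Defensive.

Local Open Scope fset_scope.

Lemma ler_ratio_nat (a b c d : nat) : 0 < b -> 0 < d ->
  (a%:R / b%:R <= c%:R / d%:R :> rat)%R = (a * d <= c * b).
Proof.
move=> b_gt0 d_gt0.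
by rewrite ler_pdivrMr ?ltr0n // mulrAC ler_pdivlMr ?ltr0n // -!natrM ler_nat.
Qed.

Lemma ltr_ratio_nat (a b c d : nat) : 0 < b -> 0 < d ->
  (a%:R / b%:R < c%:R / d%:R :> rat)%R = (a * d < c * b).
Proof.
move=> b_gt0 d_gt0.
by rewrite ltr_pdivrMr ?ltr0n // mulrAC ltr_pdivlMr ?ltr0n // -!natrM ltr_nat.
Qed.

Lemma ex_argmin_nat (T : Type) (P : T -> Prop) (f : T -> nat) x : P x ->
  exists2 y, P y & forall z, P z -> f y <= f z.
Proof.
move=> Px; pose Pf k := exists2 y, P y & f y = k.
have [k [[[y Py <-] minf] _]] := Wf_nat.dec_inh_nat_subset_has_unique_least_element Pf
  (fun k => Classical_Prop.classic (Pf k)) (ex_intro _ (f x) (ex_intro2 _ _ x Px erefl)).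
by exists y => // z Pz; apply/leP/minf; exists z.
Qed.

Lemma exists_fsubset_card (T : choiceType) (A : {fset T}) k : k <= #|` A| ->
  exists2 B : {fset T}, B `<=` A & #|` B| = k.
Proof.
move=> le_kA; exists [fset x in take k A].
  by apply/fsubsetP => x; rewrite inE => /mem_take.
by rewrite card_fseq undup_id ?take_uniq ?fset_uniq // size_take_min; apply/minn_idPl.
Qed.

Section Optimality.
Variable G : groupType.
Implicit Types (bd : {fset G} -> {fset G}) (F A : {fset G}).

Lemma optimalE bd F : optimal bd F <->
  F != fset0 /\ forall F', F' != fset0 -> #|` F'| <= #|` F| ->
    #|` bd F| * #|` F'| <= #|` bd F'| * #|` F| /\
    (#|` F'| < #|` F| -> #|` bd F| * #|` F'| < #|` bd F'| * #|` F|).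
Proof.
rewrite /optimal /bd_ratio.
split=> -[F_neq0 optF]; split=> // F' F'_neq0 leF'F;
  have F_gt0 : 0 < #|` F| by rewrite cardfs_gt0.
all: have F'_gt0 : 0 < #|` F'| by rewrite cardfs_gt0.
- by have := optF F' F'_neq0 leF'F; rewrite ler_ratio_nat ?ltr_ratio_nat.
- by rewrite ler_ratio_nat ?ltr_ratio_nat //; apply: optF.
Qed.

Lemma optimal_eq_card bd F A : optimal bd F ->
  #|` A| = #|` F| -> #|` bd A| = #|` bd F| -> optimal bd A.
Proof.
move=> optF cardA cardbdA; case: optF => F_neq0 optF; split.
  by rewrite -cardfs_gt0 cardA cardfs_gt0.
by rewrite /bd_ratio cardA cardbdA.
Qed.

End Optimality.

Section Boundaries.
Variables (G : groupType) (S : {fset G}).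
Implicit Types (A B E : {fset G}).
Local Notation ob := (outer_bd S).
Local Notation ib := (inner_bd S).

Definition outer_closure A := A `|` ob A.
Definition interior E := E `\` ib E.

Lemma outer_bdP A y : reflect
  (y \notin A /\ exists g s, [/\ g \in A, s \in symgens S & y = (g * s)%g])
  (y \in ob A).
Proof.
rewrite /outer_bd in_fsetD; apply: (iffP andP) => [[yA] | [yA [g [s [gA sS yE]]]]].
  by case/(@imfset2P _ _ _ (fun=> G)) => g gA [s sS yE]; split=> //; exists g, s.
by split=> //; apply/(@imfset2P _ _ _ (fun=> G)); exists g => //; exists s.
Qed.

Lemma inner_bdP E g : reflect
  (g \in E /\ exists2 s, s \in symgens S & (g * s)%g \notin E) (g \in ib E).
Proof.
rewrite /inner_bd !inE; apply: (iffP andP) => [[gE /hasP [s sS gsE]] | [gE [s sS gsE]]].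
  by split=> //; exists s.
by split=> //; apply/hasP; exists s.
Qed.

Lemma card_outer_closure A : #|` outer_closure A| = (#|` A| + #|` ob A|)%N.
Proof.
apply/eqP; rewrite (leq_card_fsetU A (ob A)).2.
by apply/fdisjointP => y yA; apply/negP => /outer_bdP [/negP].
Qed.

Lemma outer_closureS A B : A `<=` B -> outer_closure A `<=` outer_closure B.
Proof.
move=> /fsubsetP sAB; apply/fsubsetP => y; rewrite !in_fsetU => /orP [/sAB -> //|].
case/outer_bdP => _ [g [s [gA sS ->]]].
case: (boolP (g * s \in B)%g) => //= gsB; apply/outer_bdP; split=> //.
by exists g, s; split=> //; apply: sAB.
Qed.

Lemma inner_bd_outer_closure A : ib (outer_closure A) `<=` ob A.
Proof.
apply/fsubsetP => g /inner_bdP [+ [s sS]].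
rewrite !in_fsetU => /orP [gA | //] /norP [gsA]; case/negP.
by apply/outer_bdP; split=> //; exists g, s.
Qed.

Lemma outer_bd_interior E : ob (interior E) `<=` ib E.
Proof.
apply/fsubsetP => y /outer_bdP [y_int [g [s [g_int sS yE]]]].
move: g_int y_int; rewrite yE /interior !in_fsetD negb_and negbK => /andP [g_ib gE] /orP [// | gsE].
by case/negP: g_ib; apply/inner_bdP; split=> //; exists s.
Qed.

Lemma outer_closure_interior E : outer_closure (interior E) `<=` E.
Proof.
apply/fsubsetP => y; rewrite in_fsetU => /orP [|/(fsubsetP (outer_bd_interior E))].
  by rewrite in_fsetD => /andP [].
by case/inner_bdP.
Qed.

Lemma card_interior E : #|` E| = (#|` interior E| + #|` ib E|)%N.
Proof.
have ib_sub : ib E `<=` E by apply/fsubsetP => g /inner_bdP [].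
by rewrite cardfsDS // subnK // fsubset_leq_card.
Qed.

End Boundaries.

Section OptimalOuter.
Variables (G : groupType) (S : {fset G}) (F : {fset G}).
Hypothesis optF : optimal_out S F.
Implicit Types (A E : {fset G}).
Local Notation ob := (outer_bd S).
Local Notation ib := (inner_bd S).
Local Notation n := #|` F|.
Local Notation b := #|` ob F|.

Lemma card_optimal_gt0 : 0 < n.
Proof. by case: optF; rewrite cardfs_gt0. Qed.

Lemma outer_closure_large_interior E : n <= #|` interior S E| -> (#|` E| <= n + b)%N ->
  exists A, [/\ #|` A| = n, #|` ob A| = b & E = outer_closure S A].
Proof.
move=> le_n_int le_E.
have [A sAI cardA] := exists_fsubset_card le_n_int.
have A_neq0 : A != fset0 by rewrite -cardfs_gt0 cardA card_optimal_gt0.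
have [+ _] := ((optimalE _ _).1 optF).2 A A_neq0 (eq_leq cardA).
rewrite cardA leq_pmul2r ?card_optimal_gt0 // => le_b_obA.
have sclE : outer_closure S A `<=` E.
  exact: fsubset_trans (outer_closureS S sAI) (outer_closure_interior S E).
have := fsubset_leq_card sclE; rewrite card_outer_closure cardA => le_cl.
exists A; split=> //; first lia.
by apply/eqP; rewrite eq_sym eqEfcard sclE card_outer_closure cardA; lia.
Qed.

Lemma inner_ratio_small_interior E : E != fset0 -> #|` interior S E| < n ->
  b * #|` E| < #|` ib E| * (n + b).
Proof.
move=> E_neq0 lt_int_n; rewrite (card_interior S E).
suff : b * #|` interior S E| < #|` ib E| * n by nia.
have le_ob_ib := fsubset_leq_card (outer_bd_interior S E).
case: (posnP #|` interior S E|) => [int0 | int_gt0].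
  rewrite int0 muln0 muln_gt0 card_optimal_gt0 andbT.
  by move: E_neq0; rewrite -cardfs_gt0 (card_interior S E) int0.
have int_neq0 : interior S E != fset0 by rewrite -cardfs_gt0.
have [_ /(_ lt_int_n)] := ((optimalE _ _).1 optF).2 _ int_neq0 (ltnW lt_int_n).
by move/leq_trans; apply; rewrite leq_mul2r le_ob_ib orbT.
Qed.

Lemma inner_ratio_gt_or_outer_closure E : E != fset0 -> #|` E| <= n + b ->
  b * #|` E| < #|` ib E| * (n + b) \/
  exists A, [/\ #|` A| = n, #|` ob A| = b & E = outer_closure S A].
Proof.
move=> E_neq0 le_E; case: (ltnP #|` interior S E| n) => [lt_int_n | le_n_int].
  by left; apply: inner_ratio_small_interior.
by right; apply: outer_closure_large_interior.
Qed.

Lemma outer_closure_of_optimal_in E : #|` E| = (n + b)%N -> optimal_in S E ->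
  exists A, [/\ #|` A| = n, optimal_out S A & E = outer_closure S A].
Proof.
move=> cardE optE.
have cardclF : #|` outer_closure S F| = (n + b)%N by rewrite card_outer_closure.
have clF_neq0 : outer_closure S F != fset0.
  by rewrite -cardfs_gt0 cardclF ltn_addr ?card_optimal_gt0.
have E_neq0 : E != fset0 by case: optE.
have [ratioE | [A [cardA obA ->]]] := inner_ratio_gt_or_outer_closure E_neq0 (eq_leq cardE).
  have [+ _] := ((optimalE _ _).1 optE).2 _ clF_neq0 (eq_leq (etrans cardclF (esym cardE))).
  rewrite cardclF cardE leq_pmul2r ?ltn_addr ?card_optimal_gt0 // => le_ibE.
  have := fsubset_leq_card (inner_bd_outer_closure S F).
  by move: ratioE; rewrite cardE ltn_mul2r; lia.
by exists A; split=> //; apply: optimal_eq_card optF cardA obA.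
Qed.

Lemma optimal_in_outer_closure Fs : #|` Fs| = n -> #|` ob Fs| = b ->
  (forall A, #|` A| = n -> #|` ob A| = b ->
     #|` ib (outer_closure S Fs)| <= #|` ib (outer_closure S A)|) ->
  optimal_in S (outer_closure S Fs).
Proof.
move=> cardFs obFs minFs.
have cardcl : #|` outer_closure S Fs| = (n + b)%N by rewrite card_outer_closure cardFs obFs.
have le_ib_b : #|` ib (outer_closure S Fs)| <= b.
  by rewrite -obFs fsubset_leq_card // inner_bd_outer_closure.
apply/optimalE; split; first by rewrite -cardfs_gt0 cardcl ltn_addr ?card_optimal_gt0.
move=> E E_neq0; rewrite cardcl => le_E.
have [ratioE | [A [cardA obA defE]]] := inner_ratio_gt_or_outer_closure E_neq0 le_E.
  suff ltE : #|` ib (outer_closure S Fs)| * #|` E| < #|` ib E| * (n + b).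
    by split=> //; apply: ltnW.
  by apply: leq_ltn_trans ratioE; rewrite leq_mul2r le_ib_b orbT.
have := minFs A cardA obA; rewrite -defE => le_ib.
have cardE : #|` E| = (n + b)%N by rewrite defE card_outer_closure cardA obA.
by rewrite cardE ltnn; split=> //; rewrite leq_mul2r le_ib orbT.
Qed.

End OptimalOuter.

Theorem mainTheorem4 (G : groupType) (S : {fset G}) (F : {fset G}) :
  generates S ->
  optimal_out S F ->
  exists Fs : {fset G},
    #|` Fs| = #|` F| /\
    optimal_out S Fs /\
    optimal_in S (Fs `|` outer_bd S Fs) /\
    (forall E : {fset G},
        #|` E| = #|` (Fs `|` outer_bd S Fs)| ->
        optimal_in S E ->
        exists F2 : {fset G},
          #|` F2| = #|` F| /\ optimal_out S F2 /\ E = F2 `|` outer_bd S F2).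
Proof.
(* S need not generate G. *)
move=> _ optF.
have [Fs [cardFs obFs] minFs] := ex_argmin_nat
  (P := fun A => #|` A| = #|` F| /\ #|` outer_bd S A| = #|` outer_bd S F|)
  (fun A => #|` inner_bd S (outer_closure S A)|) (conj erefl erefl).
exists Fs; split=> //; split; first exact: optimal_eq_card optF cardFs obFs.
split; first by apply: optimal_in_outer_closure optF _ cardFs obFs _ => A *; apply: minFs.
move=> E; rewrite -/(outer_closure S Fs) card_outer_closure cardFs obFs => cardE optE.
by have [A [cardA optA ->]] := outer_closure_of_optimal_in optF cardE optE; exists A.
Qed.
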